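(* Let $\mathcal{C}$ be a category and $A$ an object of $\mathcal{C}$ satisfying the axioms RC0, RC1, RC2 below. Then every arrow $x\colon A\to X$ in $\mathcal{C}$ is a quotient of $A$ by the subgroup $H=\mathrm{Fix}(x)=\{h\in \mathrm{Aut}(A): x\circ h=x\}$; that is, the quotient $q\colon A\to A/H$ exists and the unique arrow $\varepsilon\colon A/H\to X$ with $\varepsilon\circ q=x$ is an isomorphism.
   Context: An arrow $f\colon X\to Y$ is a strict epimorphism if for every arrow $g\colon X\to Z$ which is compatible with $f$ (meaning: for every object $C$ and all $u,v\colon C\to X$ with $f\circ u=f\circ v$ one has $g\circ u=g\circ v$) there is a unique $k\colon Y\to Z$ with $g=k\circ f$. If $H$ is a group acting on an object $A$ by automorphisms (a group homomorphism $H\to \mathrm{Aut}(A)^{op}$; write $h$ also for the corresponding automorphism), the quotient $q\colon A\to A/H$ is an arrow with $q\circ h=q$ for all $h\in H$ which is universal: every $x\colon A\to X$ with $x\circ h=x$ for all $h\in H$ factors uniquely as $x=\varphi\circ q$. Write $[A,X]$ for the hom-set. Axioms: RC0: for every object $X$ there exists an arrow $A\to X$, and every arrow $A\to X$ is a strict epimorphism. RC1: for every subgroup $H\subseteq\mathrm{Aut}(A)$ the quotient $q\colon A\to A/H$ exists and is preserved by $[A,-]$, i.e. the map $[A,A]\to[A,A/H]$, $f\mapsto q\circ f$, is surjective and $q\circ f=q\circ g$ holds iff $f=h\circ g$ for some $h\in H$. RC2: every endomorphism of $A$ is an automorphism, $[A,A]=\mathrm{Aut}(A)$. *)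

Set Implicit Arguments.
Unset Strict Implicit.

Record Category := {
  Ob : Type;
  Hom : Ob -> Ob -> Type;
  idm : forall X, Hom X X;
  comp : forall X Y Z, Hom Y Z -> Hom X Y -> Hom X Z;
  comp_assoc : forall X Y Z W (f : Hom Z W) (g : Hom Y Z) (h : Hom X Y),
      comp f (comp g h) = comp (comp f g) h;
  comp_id_l : forall X Y (f : Hom X Y), comp (idm Y) f = f;
  comp_id_r : forall X Y (f : Hom X Y), comp f (idm X) = f
}.

Arguments Hom : clear implicits.
Arguments idm {c} X.
Arguments comp {c X Y Z} _ _.

Section Defs.
Variable C : Category.

Definition is_iso (X Y : Ob C) (f : Hom C X Y) : Prop :=
  exists g : Hom C Y X, comp g f = idm X /\ comp f g = idm Y.

Definition compatible (X Y Z : Ob C) (f : Hom C X Y) (g : Hom C X Z) : Prop :=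
  forall (D : Ob C) (u v : Hom C D X), comp f u = comp f v -> comp g u = comp g v.

Definition strict_epi (X Y : Ob C) (f : Hom C X Y) : Prop :=
  forall (Z : Ob C) (g : Hom C X Z), compatible f g ->
    exists k : Hom C Y Z, g = comp k f /\
      forall k' : Hom C Y Z, g = comp k' f -> k' = k.

Definition subgroup_Aut (A : Ob C) (H : Hom C A A -> Prop) : Prop :=
  H (idm A) /\
  (forall h1 h2, H h1 -> H h2 -> H (comp h1 h2)) /\
  (forall h, H h -> exists h', H h' /\ comp h' h = idm A /\ comp h h' = idm A).

Definition is_quotient (A Q : Ob C) (H : Hom C A A -> Prop) (q : Hom C A Q) : Prop :=
  (forall h, H h -> comp q h = q) /\
  forall (X : Ob C) (x : Hom C A X), (forall h, H h -> comp x h = x) ->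
    exists phi : Hom C Q X, x = comp phi q /\
      forall phi' : Hom C Q X, x = comp phi' q -> phi' = phi.

Definition RC0 (A : Ob C) : Prop :=
  forall X : Ob C, (exists f : Hom C A X, True) /\
                   (forall f : Hom C A X, strict_epi f).

Definition RC1 (A : Ob C) : Prop :=
  forall H : Hom C A A -> Prop, subgroup_Aut H ->
    exists (Q : Ob C) (q : Hom C A Q),
      is_quotient H q /\
      (forall g : Hom C A Q, exists f : Hom C A A, g = comp q f) /\
      (forall f g : Hom C A A, comp q f = comp q g <-> exists h, H h /\ f = comp h g).

Definition RC2 (A : Ob C) : Prop :=
  forall f : Hom C A A, is_iso f.

Definition Fix (A X : Ob C) (x : Hom C A X) : Hom C A A -> Prop :=
  fun h => is_iso h /\ comp x h = x.

End Defs.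


(* The quotient A/Fix(x) exists by RC1, so the point is that eps is invertible.
   By RC0 every arrow out of A is a strict epimorphism.  The arrow x is compatible
   with q: if x u = x v for u, v : D -> A, precompose with an epimorphism a : A -> D;
   by RC2 both u a and v a are automorphisms, so (u a)(v a)^-1 lies in Fix(x) and is
   absorbed by q, giving q u = q v.  Hence q = k x for some k, and since x and q are
   both epimorphisms, eps and k are mutually inverse. *)

Set Implicit Arguments.
Unset Strict Implicit.

Section Arrows.

Variable C : Category.

Definition epi (X Y : Ob C) (f : Hom C X Y) : Prop :=
  forall Z (k1 k2 : Hom C Y Z), comp k1 f = comp k2 f -> k1 = k2.

Lemma strict_epi_epi (X Y : Ob C) (f : Hom C X Y) : strict_epi f -> epi f.
Proof.
  intros f_strict Z k1 k2 E.
  destruct (f_strict Z (comp k1 f)) as [k [_ k_uniq]].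
  - intros D u v Euv. rewrite <- !comp_assoc, Euv. reflexivity.
  - rewrite (k_uniq k1 eq_refl). symmetry. apply k_uniq. exact E.
Qed.

Lemma iso_of_epi_factorizations (A X Q : Ob C) (x : Hom C A X) (q : Hom C A Q)
    (eps : Hom C Q X) (k : Hom C X Q) :
  epi x -> epi q -> comp eps q = x -> comp k x = q -> is_iso eps.
Proof.
  intros x_epi q_epi Eeps Ek. exists k. split.
  - apply q_epi. rewrite <- comp_assoc, Eeps, Ek, comp_id_l. reflexivity.
  - apply x_epi. rewrite <- comp_assoc, Ek, Eeps, comp_id_l. reflexivity.
Qed.

Lemma is_iso_id (X : Ob C) : is_iso (idm X).
Proof. exists (idm X). split; apply comp_id_l. Qed.

Lemma is_iso_comp (X Y Z : Ob C) (f : Hom C Y Z) (g : Hom C X Y) :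
  is_iso f -> is_iso g -> is_iso (comp f g).
Proof.
  intros [f' [f'f ff']] [g' [g'g gg']]. exists (comp g' f'). split.
  - rewrite comp_assoc, <- (comp_assoc g' f' f), f'f, comp_id_r. exact g'g.
  - rewrite comp_assoc, <- (comp_assoc f g g'), gg', comp_id_r. exact ff'.
Qed.

Lemma Fix_subgroup_Aut (A X : Ob C) (x : Hom C A X) : subgroup_Aut (Fix x).
Proof.
  split; [| split].
  - split; [apply is_iso_id | apply comp_id_r].
  - intros h1 h2 [iso1 xh1] [iso2 xh2]. split.
    + apply is_iso_comp; assumption.
    + rewrite comp_assoc, xh1. exact xh2.
  - intros h [[h' [h'h hh']] xh]. exists h'. split; [split | split; assumption].
    + exists h. split; assumption.
    + transitivity (comp (comp x h) h'); [rewrite xh; reflexivity |].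
      rewrite <- comp_assoc, hh'. apply comp_id_r.
Qed.

Lemma Fix_invariant_compatible (A X Y : Ob C) (x : Hom C A X) (y : Hom C A Y) :
  (forall D, exists a : Hom C A D, epi a) -> RC2 A ->
  (forall h, Fix x h -> comp y h = y) -> compatible x y.
Proof.
  intros cover aut y_inv D u v Euv.
  destruct (cover D) as [a a_epi]. apply a_epi. rewrite <- !comp_assoc.
  destruct (aut (comp v a)) as [w [wva vaw]].
  set (h := comp (comp u a) w).
  assert (h_Fix : Fix x h).
  { split; [apply aut |].
    unfold h. rewrite !comp_assoc, Euv, <- (comp_assoc x v a), <- comp_assoc, vaw.
    apply comp_id_r. }
  assert (Eua : comp u a = comp h (comp v a)).
  { unfold h. rewrite <- comp_assoc, wva, comp_id_r. reflexivity. }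
  rewrite Eua, comp_assoc, (y_inv h h_Fix). reflexivity.
Qed.

End Arrows.

Theorem proposition2p8 (C : Category) (A : Ob C) :
  RC0 A -> RC1 A -> RC2 A ->
  forall (X : Ob C) (x : Hom C A X),
    (exists (Q : Ob C) (q : Hom C A Q), is_quotient (Fix x) q) /\
    (forall (Q : Ob C) (q : Hom C A Q), is_quotient (Fix x) q ->
       forall eps : Hom C Q X, comp eps q = x -> is_iso eps).
Proof.
  intros rc0 rc1 rc2 X x.
  assert (out_epi : forall Y (f : Hom C A Y), epi f).
  { intros Y f. apply strict_epi_epi, (proj2 (rc0 Y)). }
  split.
  - destruct (rc1 _ (Fix_subgroup_Aut x)) as (Q & q & q_quot & _).
    exists Q, q. exact q_quot.
  - intros Q q [q_inv _] eps Eeps.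
    assert (cover : forall D, exists a : Hom C A D, epi a).
    { intros D. destruct (proj1 (rc0 D)) as [a _]. exists a. apply out_epi. }
    destruct (proj2 (rc0 X) x Q q (Fix_invariant_compatible cover rc2 q_inv))
      as [k [Ek _]].
    exact (iso_of_epi_factorizations (out_epi X x) (out_epi Q q) Eeps (eq_sym Ek)).
Qed.
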